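(* Let $\Omega\subset\mathbb{R}^3$ be a domain and $\mathbf{x}=\boldsymbol{\chi}(\mathbf{X})$ a smooth, one-to-one, invertible map of $\Omega$ onto $\omega$, with deformation gradient $F_{iI}=\partial x_i/\partial X_I$, Jacobian $\Lambda=\det\mathbf{F}>0$, and polar decomposition $\mathbf{F}=\mathbf{V}\mathbf{R}$ ($\mathbf{R}$ proper orthogonal, $\mathbf{V}$ symmetric positive definite with $\mathbf{V}^2=\mathbf{F}\mathbf{F}^t$). Define the vector field $\mathbf{b}(\mathbf{X})$ with components $b_K=R_{jK}\,\partial R_{jM}/\partial X_M$, i.e. $\mathbf{b}=\mathbf{R}^t\,\mathrm{Div}\,\mathbf{R}^t$, and suppose $\mathrm{Curl}\,\mathbf{b}=\nabla_{\mathbf{X}}\wedge\mathbf{b}=0$ in $\Omega$. Let $\beta$ be a function on $\Omega$ with $\nabla_{\mathbf{X}}\beta=\mathbf{b}$. Let $\kappa_0,\rho_0>0$ be constants. Then the normal acoustic fluid with energy density $$E_0=\kappa_0\big(\partial U_I/\partial X_I\big)^2+\rho_0\,\dot{\mathbf{U}}\cdot\dot{\mathbf{U}}\quad\text{in }\Omega$$ can be mapped to a metafluid with isotropic inertia, with energy density $$E=\lambda\big(V_{ij}\,\partial u_j/\partial x_i\big)^2+\rho\,\dot{\mathbf{u}}\cdot\dot{\mathbf{u}}\quad\text{in }\omega,\qquad \lambda=\Lambda^{-1}e^{-2\beta}\kappa_0,\quad \rho=\Lambda^{-1}e^{-2\beta}\rho_0,$$ in the sense that these energy densities are equivalent ($E\,\mathrm{d}v=E_0\,\mathrm{d}V$)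 under the correspondence of displacements $\mathbf{u}=e^{\beta}\mathbf{R}\mathbf{U}$.
   Context: Repeated indices are summed; upper-case indices refer to undeformed coordinates $\mathbf{X}$, lower-case to deformed coordinates $\mathbf{x}$; $\mathrm{d}v=\Lambda\,\mathrm{d}V$. Quantities in $\omega$ are evaluated at $\mathbf{x}=\boldsymbol{\chi}(\mathbf{X})$, and $\mathrm{Curl}$ is taken with respect to $\mathbf{X}$. *)

From HB Require Import structures.
From mathcomp Require Import all_boot all_order all_algebra.
From mathcomp Require Import all_classical all_reals all_analysis.
Set Implicit Arguments. Unset Strict Implicit. Unset Printing Implicit Defensive.
Import Order.TTheory GRing.Theory Num.Theory.
Import numFieldNormedType.Exports.
Local Open Scope ring_scope.
Local Open Scope classical_set_scope.

Section Defs.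
Variable R : realType.
Local Notation vec := 'rV[R]_3.
Local Notation mat := 'M[R]_3.

Definition evec (I : 'I_3) : vec := delta_mx 0 I.

Definition cmp (v : vec) (I : 'I_3) : R := v 0 I.

Definition pd (f : vec -> R) (I : 'I_3) (X : vec) : R := 'D_(evec I) f X.

Definition dotv (a b : vec) : R := \sum_(i < 3) a 0 i * b 0 i.

Definition defgrad (chi : vec -> vec) (X : vec) : mat :=
  \matrix_(i < 3, I < 3) pd (fun Y => cmp (chi Y) i) I X.

Definition bfield (Rot : vec -> mat) (X : vec) : vec :=
  \row_(K < 3) \sum_(j < 3) \sum_(M < 3)
     Rot X j K * pd (fun Y => Rot Y j M) M X.

Definition i0 : 'I_3 := inord 0.
Definition i1 : 'I_3 := inord 1.
Definition i2 : 'I_3 := inord 2.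
Definition curl (b : vec -> vec) (X : vec) : vec :=
  let d i k := pd (fun Y => cmp (b Y) k) i X in
  \row_(k < 3)
    (if (k : nat) == 0%N then d i1 i2 - d i2 i1
     else if (k : nat) == 1%N then d i2 i0 - d i0 i2
     else d i0 i1 - d i1 i0).

Definition has_gradient (beta : vec -> R) (g : vec) (X : vec) : Prop :=
  forall I : 'I_3, is_derive X (evec I) beta (g 0 I).

Definition E0 (kappa0 rho0 : R) (U : vec -> R -> vec) (X : vec) (t : R) : R :=
  kappa0 * (\sum_(I < 3) pd (fun Y => cmp (U Y t) I) I X) ^+ 2
  + rho0 * dotv (derive1 (U X) t) (derive1 (U X) t).

Definition Emeta (lam rho : R) (V : mat) (u : vec -> R -> vec) (x : vec) (t : R) : R :=
  lam * (\sum_(i < 3) \sum_(j < 3) V i j * pd (fun y => cmp (u y t) j) i x) ^+ 2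
  + rho * dotv (derive1 (u x) t) (derive1 (u x) t).

End Defs.

(* Write the new displacement in the reference configuration as w = e^beta U R^t,
   so that u o chi = w.  Since R is orthogonal, |du/dt| = e^beta |dU/dt|.  By the
   chain rule and F = V R, V_ij du_j/dx_i = (dw_j/dX_I) R_jI; expanding the
   derivative of e^beta R_jK U_K gives e^beta (div U + b.U + U_K (dR_jK/dX_I) R_jI),
   and differentiating R^t R = 1 turns the last term into -b.U.  Hence
   V_ij du_j/dx_i = e^beta div U, and the weights Lambda^-1 e^(-2 beta) make both
   energy terms match. *)

From HB Require Import structures.
From mathcomp Require Import all_boot all_order all_algebra.
From mathcomp Require Import all_classical all_reals all_analysis.
From mathcomp Require Import ring.
Import Order.TTheory GRing.Theory Num.Theory.
Import numFieldNormedType.Exports.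
Local Open Scope ring_scope.
Local Open Scope classical_set_scope.

Section RotatedFrame.
Variables (R : comPzRingType) (n : nat).
(* [r j K] stands for R_jK at a point and [dr I j K] for dR_jK/dX_I there. *)
Variables (r : 'I_n -> 'I_n -> R) (dr : 'I_n -> 'I_n -> 'I_n -> R).
Hypothesis r_orth : forall K M, \sum_(j < n) r j K * r j M = (K == M)%:R.
Hypothesis dr_orth : forall I K M,
  \sum_(j < n) (dr I j K * r j M + r j K * dr I j M) = 0.

Lemma sum_orth_coord (c : 'I_n -> R) I :
  \sum_(j < n) (\sum_(K < n) c K * r j K) * r j I = c I.
Proof.
under eq_bigr do rewrite mulr_suml.
rewrite exchange_big /=.
under eq_bigr do (under eq_bigr do rewrite -mulrA; rewrite -mulr_sumr r_orth).
by rewrite (bigD1 I) //= eqxx mulr1 big1 ?addr0 // => K /negbTE ->; rewrite mulr0.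
Qed.

Lemma sum_dr_orth K :
  \sum_(I < n) \sum_(j < n) dr I j K * r j I
  = - \sum_(j < n) \sum_(M < n) r j K * dr M j M.
Proof.
rewrite [X in _ = - X]exchange_big -sumrN; apply: eq_bigr => I _.
by apply/eqP; rewrite -subr_eq0 opprK -big_split /= dr_orth.
Qed.

Lemma trace_rotated_grad (e : R) (b U : 'I_n -> R) (dU : 'I_n -> 'I_n -> R) :
  (forall K, b K = \sum_(j < n) \sum_(M < n) r j K * dr M j M) ->
  \sum_(I < n) \sum_(j < n) (e * b I * (\sum_(K < n) U K * r j K)
      + e * \sum_(K < n) (dU I K * r j K + U K * dr I j K)) * r j I
  = e * \sum_(I < n) dU I I.
Proof.
move=> bE.
have split_rot I j : (e * b I * (\sum_(K < n) U K * r j K)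
      + e * \sum_(K < n) (dU I K * r j K + U K * dr I j K)) * r j I
    = (\sum_(K < n) (e * b I * U K + e * dU I K) * r j K) * r j I
      + e * \sum_(K < n) U K * (dr I j K * r j I).
  rewrite mulrDl !big_distrr /= !big_distrl -!big_split /=; apply: eq_bigr => K _; ring.
under eq_bigr do rewrite (eq_bigr _ (fun j _ => split_rot _ j)) big_split /= sum_orth_coord.
have frame_term : \sum_(I < n) \sum_(j < n) e * \sum_(K < n) U K * (dr I j K * r j I)
    = - \sum_(K < n) e * b K * U K.
  transitivity (\sum_(I < n) \sum_(K < n) \sum_(j < n) e * U K * (dr I j K * r j I)).
    apply: eq_bigr => I _; rewrite exchange_big /=; apply: eq_bigr => j _.
    by rewrite mulr_sumr; apply: eq_bigr => K _; rewrite mulrA.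
  rewrite exchange_big -sumrN; apply: eq_bigr => K _.
  by under eq_bigr do rewrite -mulr_sumr; rewrite -mulr_sumr sum_dr_orth -bE; ring.
by rewrite big_split /= frame_term big_split /= addrAC subrr add0r mulr_sumr.
Qed.
End RotatedFrame.

Lemma sum_polar_trace {R : comPzRingType} {n : nat} (D : 'I_n -> 'I_n -> R) (F V Q : 'M[R]_n) :
  F = V *m Q -> Q *m Q^T = 1%:M ->
  \sum_(I < n) \sum_(j < n) (\sum_(i < n) D j i * F i I) * Q j I
  = \sum_(i < n) \sum_(j < n) V i j * D j i.
Proof.
move=> FVQ QQt.
have FQt i j : \sum_(I < n) F i I * Q j I = V i j.
  by rewrite -(mulmx1 V) -QQt mulmxA -FVQ mxE; apply: eq_bigr => I _; rewrite mxE.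
rewrite exchange_big [RHS]exchange_big /=; apply: eq_bigr => j _.
under eq_bigr do rewrite mulr_suml.
rewrite exchange_big; apply: eq_bigr => i _.
by rewrite mulrC -FQt mulr_sumr; apply: eq_bigr => I _; rewrite mulrA.
Qed.

Section Calculus.
Context {R : realType}.
Local Notation vec := 'rV[R]_3.

Lemma derive_alongE {V W : normedModType R} (f : V -> W) x v :
  'D_v f x = 'D_1 (fun h : R => f (h *: v + x)) 0.
Proof.
rewrite /derive; set g1 := fun h => h^-1 *: _; set g2 := fun h => h^-1 *: _.
suff -> : g1 = g2 by [].
by rewrite funeqE /g1 /g2 => h /=; rewrite addr0 scale0r add0r [_%:A]mulr1.
Qed.

Lemma is_derive_compR {V : normedModType R} {g : R -> R} {f : V -> R} {x v df dg} :
  is_derive x v f df -> is_derive (f x) 1 g dg -> is_derive x v (g \o f) (dg * df).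
Proof.
move=> [fx fxE] gf.
have fline : is_derive (0 : R) 1 (fun h : R => f (h *: v + x)) df.
  by split; [exact: (derivable1P _ _ _).1 fx | rewrite -derive_alongE].
have gf0 : is_derive (f (0 *: v + x)) 1 g dg by rewrite scale0r add0r.
have [gfline gflineE] := is_derive1_comp gf0 fline.
split; first exact/(derivable1P _ _ _).2.
by rewrite derive_alongE.
Qed.

Lemma differentiable_entry {V : normedModType R} m n (f : V -> 'M[R]_(m, n)) x i j :
  differentiable f x -> differentiable (fun y => f y i j) x.
Proof.
move=> df; have -> : (fun y => f y i j) = (fun M : 'M[R]_(m, n) => M i j) \o f by [].
exact/differentiable_comp/differentiable_coord.
Qed.

Lemma derive_orthogonal {V : normedModType R} n (Q : V -> 'M[R]_n) x v :
  (\forall y \near x, (Q y)^T *m Q y = 1%:M) ->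
  (forall j k, derivable (fun y => Q y j k) x v) ->
  forall K M, \sum_(j < n) ('D_v (fun y => Q y j K) x * Q x j M
                        + Q x j K * 'D_v (fun y => Q y j M) x) = 0.
Proof.
move=> Qorth dQ K M.
have entry_cst : \forall y \near x, \sum_(j < n) Q y j K * Q y j M = (1%:M : 'M[R]_n) K M.
  near=> y; rewrite -(near Qorth y) // mxE.
  by apply: eq_bigr => j _; rewrite mxE.
transitivity ('D_v (fun y => \sum_(j < n) Q y j K * Q y j M) x).
  rewrite -fct_sumE derive_sum => [|j]; last exact: (derivableM (dQ j K) (dQ j M)).
  apply: eq_bigr => j _.
  by rewrite (deriveM (dQ j K) (dQ j M)) addrC; congr (_ + _); apply: mulrC.
by rewrite (near_eq_derive v entry_cst) derive_cst.
Unshelve. all: by end_near.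
Qed.

Lemma pd_sum n (h : 'I_n -> vec -> R) I X :
  (forall i, derivable (h i) X (evec R I)) ->
  pd (fun Y => \sum_(i < n) h i Y) I X = \sum_(i < n) pd (h i) I X.
Proof. by move=> dh; rewrite /pd -fct_sumE derive_sum. Qed.

Lemma pd_mul (f g : vec -> R) I X :
  derivable f X (evec R I) -> derivable g X (evec R I) ->
  pd (fun Y => f Y * g Y) I X = f X * pd g I X + g X * pd f I X.
Proof. by move=> df dg; rewrite /pd (deriveM df dg). Qed.

Lemma pd_comp (chi : vec -> vec) (f : vec -> R) X I :
  differentiable chi X -> differentiable f (chi X) ->
  pd (f \o chi) I X = \sum_(i < 3) pd f i (chi X) * defgrad chi X i I.
Proof.
move=> dchi df.
rewrite /pd deriveE; last exact: differentiable_comp.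
rewrite diff_comp //= -[X in 'd f _ X]deriveE // derive_mx; last exact: diff_derivable.
rewrite [X in 'd f _ X]row_sum_delta linear_sum; apply: eq_bigr => i _.
by rewrite linearZ /= -deriveE // mulrC !mxE.
Qed.

Lemma pd_gauge_rotate {beta : vec -> R} {U0 : vec -> vec} {Q : vec -> 'M[R]_3}
    {X j I bI} :
  is_derive X (evec R I) beta bI -> differentiable U0 X ->
  (forall j k, differentiable (fun Y => Q Y j k) X) ->
  pd (fun Y => expR (beta Y) * \sum_(K < 3) U0 Y 0 K * Q Y j K) I X =
  expR (beta X) * bI * (\sum_(K < 3) U0 X 0 K * Q X j K)
  + expR (beta X) * \sum_(K < 3) (pd (fun Y => cmp (U0 Y) K) I X * Q X j K
                                  + U0 X 0 K * pd (fun Y => Q Y j K) I X).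
Proof.
move=> dbeta dU dQ.
have [dexp dexpE] := is_derive_compR dbeta (is_derive_expR (beta X)).
have dU0 K : derivable (fun Y => U0 Y 0 K) X (evec R I).
  exact/diff_derivable/differentiable_entry.
have dterm K : derivable (fun Y => U0 Y 0 K * Q Y j K) X (evec R I).
  exact: (derivableM (dU0 K) (diff_derivable (dQ j K))).
rewrite pd_mul //; last by rewrite -fct_sumE; exact: derivable_sum.
rewrite [pd (fun Y => expR (beta Y)) I X]dexpE pd_sum // addrC mulrC.
congr (_ + _); congr (_ * _); apply: eq_bigr => K _.
by rewrite pd_mul //; [rewrite addrC mulrC | exact: diff_derivable].
Qed.

Lemma is_derive_mulmxr {V : normedModType R} {m n p} {f : V -> 'M[R]_(m, n)}
    (M : 'M[R]_(n, p)) {x v df} :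
  is_derive x v f df -> is_derive x v (fun y => f y *m M) (df *m M).
Proof.
move=> [fd <-].
have entry i k b : is_derive x v (fun y => M k b *: f y i k) (M k b *: 'D_v f x i k).
  apply: is_deriveZ; rewrite derive_mx // mxE; apply: derivableP.
  exact: (derivable_mxP _ _ _).1 fd i k.
have prod i b : is_derive x v (fun y => (f y *m M) i b) (('D_v f x *m M) i b).
  have -> : (fun y => (f y *m M) i b) = \sum_(k < n) (fun y => M k b *: f y i k).
    by apply/funext => y; rewrite mxE fct_sumE; apply: eq_bigr => k _; rewrite mulrC.
  rewrite mxE (eq_bigr (fun k => M k b *: 'D_v f x i k)) => [|k _]; last exact: mulrC.
  exact: is_derive_sum.
have fMd : derivable (fun y => f y *m M) x v.
  by apply/derivable_mxP => i b; have [] := prod i b.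
apply: DeriveDef => //; apply/matrixP => i b.
by rewrite derive_mx // mxE; have [] := prod i b.
Qed.

Lemma dotv_scale_orth (c : R) (a : vec) (Q : 'M[R]_3) :
  Q^T *m Q = 1%:M -> dotv (c *: (a *m Q^T)) (c *: (a *m Q^T)) = c ^+ 2 * dotv a a.
Proof.
move=> QtQ; have dotvE (x y : vec) : dotv x y = (x *m y^T) 0 0.
  by rewrite mxE; apply: eq_bigr => i _; rewrite mxE.
rewrite !dotvE linearZ /= -scalemxAl -scalemxAr trmx_mul trmxK mulmxA -(mulmxA a) QtQ.
by rewrite mulmx1 !mxE mulrA -expr2.
Qed.

Lemma polar_grad_trace_gauge {chi : vec -> vec} {Q : vec -> 'M[R]_3} {Vm : 'M[R]_3}
    {beta : vec -> R} {U0 u0 : vec -> vec} {X} :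
  differentiable chi X -> defgrad chi X = Vm *m Q X ->
  (\forall Y \near X, (Q Y)^T *m Q Y = 1%:M) ->
  (forall j k, differentiable (fun Y => Q Y j k) X) ->
  has_gradient beta (bfield Q X) X ->
  differentiable U0 X -> differentiable u0 (chi X) ->
  (\forall Y \near X, u0 (chi Y) = expR (beta Y) *: (U0 Y *m (Q Y)^T)) ->
  \sum_(i < 3) \sum_(j < 3) Vm i j * pd (fun y => cmp (u0 y) j) i (chi X)
  = expR (beta X) * \sum_(I < 3) pd (fun Y => cmp (U0 Y) I) I X.
Proof.
move=> dchi FVQ Qorth dQ dbeta dU du ucorr.
have QtQ : (Q X)^T *m Q X = 1%:M := nbhs_singleton Qorth.
have QQt : Q X *m (Q X)^T = 1%:M := mulmx1C QtQ.
rewrite -(sum_polar_trace _ _ _ _ FVQ QQt).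
have chain j I : \sum_(i < 3) pd (fun y => cmp (u0 y) j) i (chi X) * defgrad chi X i I
    = pd (fun Y => expR (beta Y) * \sum_(K < 3) U0 Y 0 K * Q Y j K) I X.
  rewrite -pd_comp //; last exact: differentiable_entry.
  apply: near_eq_derive; near=> Y.
  by rewrite /= /cmp (near ucorr Y) // !mxE; congr (_ * _); apply: eq_bigr => K _; rewrite !mxE.
under eq_bigr do under eq_bigr do rewrite chain (pd_gauge_rotate (dbeta _) dU dQ).
apply: (@trace_rotated_grad _ _ (fun j K => Q X j K)
                              (fun I j K => pd (fun Y => Q Y j K) I X)).
- move=> K M; have := congr1 (fun A : 'M[R]_3 => A K M) QtQ; rewrite !mxE => <-.
  by apply: eq_bigr => j _; rewrite mxE.
- by move=> I; apply: derive_orthogonal Qorth _ => j k; exact: diff_derivable.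
- by move=> K; rewrite mxE.
Unshelve. all: by end_near.
Qed.

End Calculus.

Theorem lemma2 (R : realType) (Omega : set 'rV[R]_3)
  (chi : 'rV[R]_3 -> 'rV[R]_3)
  (Rot V : 'rV[R]_3 -> 'M[R]_3)
  (beta : 'rV[R]_3 -> R) (kappa0 rho0 : R)
  (U u : 'rV[R]_3 -> R -> 'rV[R]_3) :
  open Omega -> connected Omega ->
  (forall X, Omega X -> differentiable chi X) ->
  {in Omega &, injective chi} ->
  (forall X, Omega X -> 0 < \det (defgrad chi X)) ->
  (forall X, Omega X ->
     defgrad chi X = V X *m Rot X /\
     (Rot X)^T *m Rot X = 1%:M /\ \det (Rot X) = 1 /\
     (V X)^T = V X /\
     (forall v : 'rV[R]_3, v != 0 -> 0 < (v *m V X *m v^T) 0 0) /\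
     V X *m V X = defgrad chi X *m (defgrad chi X)^T) ->
  (forall X, Omega X -> forall j k : 'I_3, differentiable (fun Y => Rot Y j k) X) ->
  (forall X, Omega X -> curl (bfield Rot) X = 0) ->
  (forall X, Omega X -> has_gradient beta (bfield Rot X) X) ->
  0 < kappa0 -> 0 < rho0 ->
  (forall X, Omega X -> forall t, differentiable (fun Y => U Y t) X) ->
  (forall X, Omega X -> forall t, derivable (U X) t 1) ->
  (forall X, Omega X -> forall t, u (chi X) t = expR (beta X) *: (U X t *m (Rot X)^T)) ->
  (forall x, (chi @` Omega) x -> forall t, differentiable (fun y => u y t) x) ->
  forall X, Omega X -> forall t,
    let Lambda := \det (defgrad chi X) in
    let lam := Lambda^-1 * expR (- (2 * beta X)) * kappa0 in
    let rho := Lambda^-1 * expR (- (2 * beta X)) * rho0 in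
    Emeta lam rho (V X) u (chi X) t * Lambda = E0 kappa0 rho0 U X t.
Proof.
(* The identity is pointwise: the curl condition, connectedness, injectivity and the
   signs of kappa0, rho0 only make beta and the deformed fluid meaningful. *)
move=> oO _ dchi _ detpos polar dRot _ dbeta _ _ dU dUt ucorr udiff X OX t Lambda lam rho.
have [FVR [RtR _]] := polar X OX.
have nearO : \forall Y \near X, Omega Y by apply: open_nbhs_nbhs.
set e := expR (beta X).
have time_rate : derive1 (u (chi X)) t = e *: (derive1 (U X) t *m (Rot X)^T).
  have -> : u (chi X) = fun s => e *: (U X s *m (Rot X)^T).
    by apply/funext => s; rewrite ucorr.
  have dUR := is_derive_mulmxr (Rot X)^T (derivableP (dUt X OX t)).
  by rewrite !derive1E deriveZ ?derive_val //; case: dUR.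
have orth_near : \forall Y \near X, (Rot Y)^T *m Rot Y = 1%:M.
  by apply: filterS nearO => Y /polar[_ []].
have gauge_near : \forall Y \near X,
    u (chi Y) t = expR (beta Y) *: (U Y t *m (Rot Y)^T).
  by apply: filterS nearO => Y OY; exact: ucorr.
have space_rate := polar_grad_trace_gauge (dchi X OX) FVR orth_near (dRot X OX)
  (dbeta X OX) (dU X OX t) (udiff _ (ex_intro2 _ _ X OX erefl) t) gauge_near.
rewrite /Emeta /E0 time_rate dotv_scale_orth // space_rate /lam /rho.
have L0 : Lambda != 0 by rewrite gt_eqF // detpos.
have e_cancel : expR (- (2 * beta X)) * e ^+ 2 = 1.
  by rewrite -expRM_natl -expRD mulrC addNr expR0.
set S := \sum_(I < 3) _; set D := dotv _ _.
transitivity (Lambda^-1 * Lambda * (expR (- (2 * beta X)) * e ^+ 2)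
              * (kappa0 * S ^+ 2 + rho0 * D)); first by rewrite -/e; ring.
by rewrite mulVf // e_cancel !mul1r.
Qed.
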